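(* Let $k\ge0$ and $\mathbf n=(n_1,\dots,n_r)$ with $r\ge1$ and $n_i\ge1$ for all $i$, and let $I:=\{i\in[r]: n_i\ge 2k+3\}$. Then the product $\prod_{i\in I}C_{2k+2}(n_i+1)\times\prod_{i\notin I}\Delta_{n_i}$ is a $(k,\mathbf n)$-PPSN polytope of dimension $(2k+2)|I|+\sum_{i\notin I}n_i$. Consequently $\delta(k,\mathbf n)\le\delta_{pr}(k,\mathbf n)\le (2k+2)|I|+\sum_{i\notin I}n_i$.
   Context: $C_d(m)$ denotes a cyclic polytope: the convex hull of $m$ distinct points on the moment curve $t\mapsto(t,t^2,\dots,t^d)^T$ in $\mathbb R^d$. $\Delta_m$ denotes the $m$-dimensional simplex; for $\mathbf n=(n_1,\dots,n_r)$, $\Delta_{\mathbf n}:=\Delta_{n_1}\times\dots\times\Delta_{n_r}$. The $k$-skeleton of a polytope is the poset of its faces of dimension at most $k$; two $k$-skeleta are combinatorially equivalent if these posets are isomorphic. A convex polytope is $(k,\mathbf n)$-PSN if its $k$-skeleton is combinatorially equivalent to that of $\Delta_{\mathbf n}$, and $(k,\mathbf n)$-PPSN if in addition it is the image under a linear projection of a polytope combinatorially equivalent to $\Delta_{\mathbf n}$. $\delta(k,\mathbf n)$ (resp. $\delta_{pr}(k,\mathbf n)$) is the smallest dimension of a $(k,\mathbf n)$-PSN (resp. $(k,\mathbf n)$-PPSN) polytope. *)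

From HB Require Import structures.
From mathcomp Require Import all_boot all_order all_algebra.
Set Implicit Arguments. Unset Strict Implicit. Unset Printing Implicit Defensive.
Import Order.TTheory GRing.Theory Num.Theory.
Local Open Scope ring_scope.

Section Polytopes.
Variable R : rcfType.

(* A polytope in R^d is represented as conv of a finite family of points
   V : T -> 'rV[R]_d indexed by a finite type T. *)

Definition dotv d (x y : 'rV[R]_d) : R := (x *m y^T) 0 0.

Definition in_hull (T : finType) d (V : T -> 'rV[R]_d) (x : 'rV[R]_d) : Prop :=
  exists l : T -> R, (forall t, 0 <= l t) /\ \sum_t l t = 1 /\
                     x = \sum_t l t *: V t.

(* Faces of conv V, recorded by the set of indices of the points of V they
   contain: the empty face, and the maximizer sets of linear functionals
   (c = 0 gives the whole polytope). *)
Definition face_of (T : finType) d (V : T -> 'rV[R]_d) (F : {set T}) : Prop :=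
  F = set0 \/
  exists c : 'rV[R]_d, F = [set t | [forall s, dotv c (V s) <= dotv c (V t)]].

(* homogenized point matrix of the points indexed by F; its rank is
   (affine dimension of conv {V t | t in F}) + 1, and 0 for F empty *)
Definition hmx (T : finType) d (V : T -> 'rV[R]_d) (F : {set T}) :
  'M[R]_(#|T|, 1 + d) :=
  \matrix_(i < #|T|) (if enum_val i \in F
                      then row_mx (const_mx 1) (V (enum_val i)) else 0).

(* dimension of the polytope conv V (for T nonempty) *)
Definition pdim (T : finType) d (V : T -> 'rV[R]_d) : nat :=
  (\rank (hmx V setT)).-1.

(* faces of dimension at most k (the empty face, of dimension -1, included) *)
Definition skel (T : finType) d (V : T -> 'rV[R]_d) (k : nat) (F : {set T})
  : Prop := face_of V F /\ (\rank (hmx V F) <= k.+1)%N.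

Definition poset_iso (T U : finType) (P : {set T} -> Prop)
  (Q : {set U} -> Prop) : Prop :=
  exists f : {set T} -> {set U},
    (forall F, P F -> Q (f F)) /\
    (forall G, Q G -> exists2 F, P F & f F = G) /\
    (forall F1 F2, P F1 -> P F2 -> (F1 \subset F2) = (f F1 \subset f F2)).

Definition skel_equiv (T U : finType) d e (V : T -> 'rV[R]_d)
  (W : U -> 'rV[R]_e) (k : nat) : Prop :=
  poset_iso (skel V k) (skel W k).

Definition comb_equiv (T U : finType) d e (V : T -> 'rV[R]_d)
  (W : U -> 'rV[R]_e) : Prop :=
  poset_iso (face_of V) (face_of W).

Definition simplex_pts (n : nat) (j : 'I_n.+1) : 'rV[R]_n :=
  if unlift ord0 j is Some j' then delta_mx 0 j' else 0.

Definition moment (D : nat) (t : R) : 'rV[R]_D := \row_(a < D) t ^+ a.+1.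

Definition prod_pts (r : nat) (T : 'I_r -> finType) (d : 'I_r -> nat)
  (V : forall i, T i -> 'rV[R]_(d i)) (x : {dffun forall i, T i}) :
  'rV[R]_(\sum_i d i) := \mxrow_(i < r) V i (x i).

Definition Delta_pts (r : nat) (n : 'I_r -> nat) :
  {dffun forall i : 'I_r, 'I_(n i).+1} -> 'rV[R]_(\sum_i n i) :=
  @prod_pts r (fun i => 'I_(n i).+1) n (fun i => @simplex_pts (n i)).

Definition PSN (r : nat) (k : nat) (n : 'I_r -> nat)
  (T : finType) d (V : T -> 'rV[R]_d) : Prop :=
  skel_equiv V (@Delta_pts r n) k.

Definition PPSN (r : nat) (k : nat) (n : 'I_r -> nat)
  (T : finType) d (V : T -> 'rV[R]_d) : Prop :=
  PSN k n V /\
  exists (N : nat) (U : finType) (W : U -> 'rV[R]_N) (A : 'M[R]_(N, d)),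
    comb_equiv W (@Delta_pts r n) /\
    (forall x, in_hull V x <-> in_hull (fun u => W u *m A) x).

Definition is_min_dim
  (P : forall (T : finType) d, (T -> 'rV[R]_d) -> Prop) (m : nat) : Prop :=
  (exists (T : finType) d (V : T -> 'rV[R]_d), P T d V /\ pdim V = m) /\
  (forall (T : finType) d (V : T -> 'rV[R]_d), P T d V -> (m <= pdim V)%N).

(* the factors of the product in the theorem: C_{2k+2}(n_i+1) (with
   parameters t_i) when b = (n_i >= 2k+3), and Delta_{n_i} otherwise *)
Definition factor_dim (k ni : nat) : nat :=
  if (2 * k + 3 <= ni)%N then (2 * k + 2)%N else ni.

Definition factor_pts (k ni : nat) (t : nat -> R) :
  'I_ni.+1 -> 'rV[R]_(factor_dim k ni) :=
  if (2 * k + 3 <= ni)%N as b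
     return 'I_ni.+1 -> 'rV[R]_(if b then (2 * k + 2)%N else ni)
  then fun j => moment (2 * k + 2) (t j)
  else @simplex_pts ni.

Definition thm_pts (r k : nat) (n : 'I_r -> nat) (t : 'I_r -> nat -> R) :
  {dffun forall i : 'I_r, 'I_(n i).+1} ->
  'rV[R]_(\sum_i factor_dim k (n i)) :=
  @prod_pts r (fun i => 'I_(n i).+1) (fun i => factor_dim k (n i))
           (fun i => factor_pts k (t i)).

End Polytopes.
Arguments thm_pts {R r} k n t _.

From HB Require Import structures.
From mathcomp Require Import all_boot all_order all_algebra.
From mathcomp Require Import zify.
From Stdlib Require Import Classical Wf_nat.
Import Order.TTheory GRing.Theory Num.Theory.
Local Open Scope ring_scope.

Set Implicit Arguments. Unset Strict Implicit. Unset Printing Implicit Defensive.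

(* Hence the
      k-skeleton of a product only depends on the faces of dimension at most
      k of the factors and on their ranks ([skel_prod_transfer]).
   3. Factors: every nonempty vertex set of a simplex is an affinely
      independent face; any D+1 distinct points of the moment curve in R^D
      are affinely independent, and any at most D/2 of them form a face
      (cyclic polytopes are neighborly).  So C_{2k+2}(n+1) and Delta_n have
      the same faces with at most k+1 vertices, with the same ranks.
   4. The theorem: the k-skeleta of the product and of Delta_n coincide, its
      dimension follows from part 2, it is an affine image of Delta_n (hence
      a linear projection of Delta_n lifted to height 1), and the minimal
      dimensions exist by well-foundedness of nat. *)

Section Homogenization.
Variable R : rcfType.

Definition hrow m (v : 'rV[R]_m) : 'rV[R]_(1 + m) := row_mx (const_mx 1) v.

Lemma const_mx1 : const_mx 1 = 1%:M :> 'M[R]_1.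
Proof. by apply/matrixP => i j; rewrite !mxE !ord1. Qed.

(* an affine functional, encoded as a column, evaluated at a point *)
Lemma hrow_mul m (v : 'rV[R]_m) (c : R) (w : 'cV[R]_m) :
  hrow v *m col_mx c%:M w = (c + (v *m w) 0 0)%:M.
Proof.
rewrite /hrow mul_row_col const_mx1 mul1mx; apply/matrixP => i j.
by rewrite !ord1 !mxE /= mulr1n.
Qed.

Lemma row_hmx (T : finType) m (V : T -> 'rV[R]_m) F i :
  row i (hmx V F) = if enum_val i \in F then hrow (V (enum_val i)) else 0.
Proof. by rewrite rowK. Qed.

Lemma row_rank_hmx (T : finType) m (V : T -> 'rV[R]_m) F x :
  row (enum_rank x) (hmx V F) = if x \in F then hrow (V x) else 0.
Proof. by rewrite row_hmx enum_rankK. Qed.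

Lemma hrow_sub_hmx (T : finType) m (V : T -> 'rV[R]_m) (F : {set T}) x :
  x \in F -> (hrow (V x) <= hmx V F)%MS.
Proof.
by move=> xF; apply: (eq_row_sub (enum_rank x)); rewrite row_rank_hmx xF.
Qed.

Lemma hmx_set0 (T : finType) m (V : T -> 'rV[R]_m) : hmx V set0 = 0.
Proof. by apply/row_matrixP => i; rewrite row_hmx inE row0. Qed.

Definition hmx_index (T : finType) (F : {set T}) (j : 'I_#|F|) : 'I_#|T| :=
  enum_rank (enum_val j).

Lemma hmx_sub_rowsub (T : finType) m (V : T -> 'rV[R]_m) (F : {set T}) :
  (hmx V F <= rowsub (@hmx_index T F) (hmx V F))%MS.
Proof.
apply/row_subP => i; rewrite row_hmx; case: ifP => iF; last exact: sub0mx.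
apply: (eq_row_sub (enum_rank_in iF (enum_val i))).
by rewrite row_rowsub /hmx_index enum_rankK_in // row_rank_hmx iF.
Qed.

Lemma rank_hmx_le_card (T : finType) m (V : T -> 'rV[R]_m) (F : {set T}) :
  (\rank (hmx V F) <= #|F|)%N.
Proof. exact: leq_trans (mxrankS (hmx_sub_rowsub V F)) (rank_leq_row _). Qed.

Lemma rank_hmx_subset (T : finType) m (V : T -> 'rV[R]_m) (F G : {set T}) :
  F \subset G -> (\rank (hmx V F) <= \rank (hmx V G))%N.
Proof.
move=> FG; apply: mxrankS; apply/row_subP => i; rewrite row_hmx.
case: ifP => iF; last exact: sub0mx.
exact: hrow_sub_hmx (subsetP FG _ iF).
Qed.

Lemma rank_hmx_dual (T : finType) m (V : T -> 'rV[R]_m) (G : {set T})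
  (fs : T -> 'cV[R]_(1 + m)) :
  (forall g h, g \in G -> h \in G -> hrow (V h) *m fs g = (g == h)%:R%:M) ->
  \rank (hmx V G) = #|G|.
Proof.
move=> dual; apply/eqP; rewrite eqn_leq rank_hmx_le_card /=.
pose B : 'M[R]_(1 + m, #|G|) := \matrix_(a, j) fs (enum_val j) a 0.
have rowsubB : rowsub (@hmx_index T G) (hmx V G) *m B = 1%:M.
  apply/row_matrixP => j.
  rewrite row_mul row_rowsub /hmx_index row_rank_hmx enum_valP.
  apply/rowP => j'; rewrite !mxE.
  have := dual (enum_val j') (enum_val j) (enum_valP j') (enum_valP j).
  move/matrixP/(_ 0 0); rewrite !mxE /= mulr1n (inj_eq enum_val_inj) eq_sym => <-.
  by apply: eq_bigr => a _; rewrite !mxE.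
have := mxrankM_maxl (rowsub (@hmx_index T G) (hmx V G)) B.
rewrite rowsubB mxrank1 => /leq_trans; apply.
exact: mxrankS (rowsub_sub _ _).
Qed.

Definition diffmx (T : finType) m (V : T -> 'rV[R]_m) (F : {set T}) b :
  'M[R]_(#|T|, m) :=
  \matrix_(i < #|T|) (if enum_val i \in F then V (enum_val i) - V b else 0).

Lemma rank_hmx_diffmx (T : finType) m (V : T -> 'rV[R]_m) (F : {set T}) b :
  b \in F -> \rank (hmx V F) = (1 + \rank (diffmx V F b))%N.
Proof.
move=> bF.
pose Blk := block_mx (1%:M : 'M[R]_1) (V b) 0 (diffmx V F b).
have hmxE : (hmx V F :=: Blk)%MS.
  apply/eqmxP/andP; split.
    apply/row_subP => i; rewrite row_hmx; case: ifP => iF; last exact: sub0mx.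
    have -> : hrow (V (enum_val i)) =
              row_mx 1%:M (V b) + row_mx 0 (V (enum_val i) - V b).
      by rewrite add_row_mx addr0 addrC subrK /hrow const_mx1.
    apply: addmx_sub.
      apply: (eq_row_sub (lshift _ 0)); rewrite /Blk block_mxEv rowKu row_row_mx.
      by congr row_mx; apply/matrixP => i' j; rewrite !mxE !ord1.
    apply: (eq_row_sub (rshift _ i)).
    by rewrite /Blk block_mxEv rowKd row_row_mx row0 rowK iF.
  rewrite /Blk block_mxEv col_mx_sub; apply/andP; split.
    by rewrite -const_mx1; exact: hrow_sub_hmx bF.
  apply/row_subP => i; rewrite row_row_mx row0 rowK; case: ifP => iF.
    have -> : row_mx 0 (V (enum_val i) - V b) =
              hrow (V (enum_val i)) - hrow (V b).
      by rewrite /hrow opp_row_mx add_row_mx subrr.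
    by apply: addmx_sub; rewrite ?(eqmx_opp _) hrow_sub_hmx.
  by rewrite row_mx0 sub0mx.
rewrite hmxE.
pose U := block_mx (1%:M : 'M[R]_1) (- V b) 0 (1%:M : 'M[R]_m).
have Uu : U \in unitmx by rewrite unitmxE det_ublock !det1 mulr1 unitr1.
rewrite -(mxrankMfree Blk (_ : row_free U)) ?row_free_unit //.
rewrite /Blk /U mulmx_block !mulmx0 !mul1mx !mulmx1 !addr0 mul0mx add0r.
by rewrite addrC subrr rank_diag_block_mx mxrank1.
Qed.

End Homogenization.

Section Maximizers.
Variable R : rcfType.

Definition maximizers (U : finType) (f : U -> R) : {set U} :=
  [set t | [forall s, f s <= f t]].

Lemma maximizersE (U : finType) (f : U -> R) (G : {set U}) :
  G != set0 ->
  (forall g h, g \in G -> h \in G -> f h = f g) ->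
  (forall g h, g \in G -> h \notin G -> f h < f g) -> maximizers f = G.
Proof.
case/set0Pn => g0 g0G fG fGc; apply/setP => x; rewrite inE.
case: (boolP (x \in G)) => xG.
  apply/forallP => y; case: (boolP (y \in G)) => yG; first by rewrite (fG x y).
  exact: ltW (fGc _ _ xG yG).
by apply/negbTE/negP => /forallP/(_ g0); rewrite leNgt fGc.
Qed.

End Maximizers.

Section Product.
Variable R : rcfType.
Variable r : nat.
Variable T : 'I_r -> finType.
Variable e : 'I_r -> nat.
Variable Q : forall i, T i -> 'rV[R]_(e i).

Local Notation X := {dffun forall i, T i}.
Local Notation P := (@prod_pts R r T e Q).

Definition factor_emb i : 'M[R]_(e i, \sum_j e j) :=
  \mxrow_j (if i == j then conform_mx (0 : 'M[R]_(e i, e j)) (1%:M : 'M[R]_(e i))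
       else (0 : 'M[R]_(e i, e j))).

Lemma mxrow_factor_emb (w : forall i, 'rV[R]_(e i)) :
  \mxrow_j w j = \sum_i w i *m factor_emb i.
Proof.
rewrite /factor_emb; transitivity (\mxrow_j (\sum_i w i *m
   (if i == j then conform_mx (0 : 'M[R]_(e i, e j)) (1%:M : 'M[R]_(e i))
       else (0 : 'M[R]_(e i, e j))))).
  apply: eq_mxrow => j.
  rewrite (bigD1 j) //= eqxx conform_mx_id mulmx1 big1 ?addr0 // => i /negbTE ->.
  by rewrite mulmx0.
by rewrite mxrow_sum; apply: eq_bigr => i _; rewrite mul_mxrow.
Qed.

Lemma mxrow_single_emb i m (K : 'M[R]_(m, e i)) :
  \mxrow_j (if i == j then conform_mx (0 : 'M[R]_(m, e j)) K else 0) =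
  K *m factor_emb i.
Proof.
rewrite /factor_emb mul_mxrow; apply: eq_mxrow => j.
case: (eqVneq i j) => [<-|_]; last by rewrite mulmx0.
by rewrite !conform_mx_id mulmx1.
Qed.

Definition upd (x : X) i (s : T i) : X := finfun (fun j => dfwith x s j).
Arguments upd x i s : clear implicits.

Lemma upd_in (x : X) i s : upd x i s i = s.
Proof. by rewrite ffunE dfwith_in. Qed.

Lemma upd_out (x : X) i s j : i != j -> upd x i s j = x j.
Proof. by move=> ij; rewrite ffunE dfwith_out. Qed.

Lemma prod_pts_upd (x : X) i (s : T i) :
  P (upd x i s) - P x = (Q s - Q (x i)) *m factor_emb i.
Proof.
rewrite /prod_pts -mxrowB mxrow_factor_emb [LHS](bigD1 i) //= upd_in.
rewrite [X in _ + X = _]big1 ?addr0 // => j ij.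
by rewrite upd_out 1?eq_sym // subrr mul0mx.
Qed.

Lemma dotv_prod_pts c (x : X) :
  dotv c (P x) = \sum_i dotv (submxrow c i) (Q (x i)).
Proof.
by rewrite /dotv /prod_pts -[c in LHS]submxrowK tr_mxrow mul_mxrow_mxcol summxE.
Qed.

Definition prodset (G : forall i, {set T i}) : {set X} :=
  [set x : X | [forall i, x i \in G i]].

Lemma eq_prodset (G G' : forall i, {set T i}) :
  (forall i, G i = G' i) -> prodset G = prodset G'.
Proof.
by move=> GE; apply/setP => x; rewrite !inE; apply/forallP/forallP => Gx i;
  rewrite ?GE // -GE.
Qed.

Lemma maximizers_sum (f : forall i, T i -> R) :
  maximizers (fun x : X => \sum_i f i (x i)) =
  prodset (fun i => maximizers (f i)).
Proof.
apply/setP => x; rewrite !inE; apply/forallP/forallP => xmax.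
  move=> i; rewrite inE; apply/forallP => s.
  have := xmax (upd x i s); rewrite (bigD1 i) //= [X in _ <= X](bigD1 i) //=.
  rewrite upd_in (eq_bigr (fun j => f j (x j))) ?lerD2r //.
  by move=> j ij; rewrite upd_out // eq_sym.
move=> y; apply: ler_sum => i _; have := xmax i; rewrite inE => /forallP; apply.
Qed.

Lemma face_of_prod (F : {set X}) :
  face_of P F <-> F = set0 \/
    exists c : forall i, 'rV[R]_(e i),
      F = prodset (fun i => maximizers (fun s => dotv (c i) (Q s))).
Proof.
split => [[->|[c ->]]|[->|[c ->]]]; try by left.
- right; exists (fun i => submxrow c i); rewrite -maximizers_sum.
  by apply/setP => x; rewrite !inE; apply/forallP/forallP => H y;
    have := H y; rewrite !dotv_prod_pts.
- right; exists (\mxrow_i c i); rewrite -maximizers_sum.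
  apply/setP => x; rewrite !inE.
  have cE z : \sum_i dotv (submxrow (\mxrow_i c i) i) (Q (z i)) =
              \sum_i dotv (c i) (Q (z i)).
    by apply: eq_bigr => i _; rewrite mxrowK.
  by apply/forallP/forallP => H y; have := H y; rewrite !dotv_prod_pts !cE.
Qed.

Lemma diffmx_prod (G : forall i, {set T i}) (x0 : X) :
  x0 \in prodset G ->
  (diffmx P (prodset G) x0 :=: \mxdiag_i <<diffmx (Q (i:=i)) (G i) (x0 i)>>)%MS.
Proof.
move=> x0G.
have diagE : (\mxdiag_i <<diffmx (Q (i:=i)) (G i) (x0 i)>> :=:
           \sum_i <<diffmx (Q (i:=i)) (G i) (x0 i) *m factor_emb i>>)%MS.
  rewrite /mxdiag mxblockEv; apply: eqmx_trans (eqmx_col _) _.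
  apply/eqmxP/andP; split; apply/sumsmx_subP => i _; apply: (sumsmx_sup i) => //;
    by rewrite !genmxE mxrow_single_emb (eqmxMr _ (genmxE _)).
apply: (eqmx_trans _ (eqmx_sym diagE)); apply/eqmxP/andP; split.
  apply/row_subP => a; rewrite rowK; case: ifP => aG; last exact: sub0mx.
  rewrite /prod_pts -mxrowB mxrow_factor_emb; apply: summx_sub => i _.
  apply: (sumsmx_sup i) => //; rewrite genmxE.
  move: aG; rewrite inE => /forallP/(_ i) ai.
  apply: (eq_row_sub (enum_rank (enum_val a i))).
  by rewrite row_mul rowK enum_rankK ai.
apply/sumsmx_subP => i _; rewrite genmxE; apply/row_subP => a.
rewrite row_mul rowK; case: ifP => aG; last by rewrite mul0mx sub0mx.
have uG : upd x0 i (enum_val a) \in prodset G.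
  rewrite inE; apply/forallP => j; case: (eqVneq i j) => [<-|ij].
    by rewrite upd_in.
  by rewrite upd_out //; move: x0G; rewrite inE => /forallP.
apply: (eq_row_sub (enum_rank (upd x0 i (enum_val a)))).
by rewrite rowK enum_rankK uG prod_pts_upd.
Qed.

Lemma rank_hmx_prod (G : forall i, {set T i}) (x0 : X) :
  x0 \in prodset G ->
  \rank (hmx P (prodset G)) =
    (1 + \sum_i (\rank (hmx (Q (i:=i)) (G i))).-1)%N.
Proof.
move=> x0G; rewrite (rank_hmx_diffmx _ x0G) (diffmx_prod x0G) rank_mxdiag.
congr (1 + _)%N; apply: eq_bigr => i _.
have xi : x0 i \in G i by move: x0G; rewrite inE => /forallP.
by rewrite mxrank_gen (rank_hmx_diffmx _ xi).
Qed.

End Product.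

Lemma leq_sum_term (r : nat) (f : 'I_r -> nat) i : (f i <= \sum_j f j)%N.
Proof. by rewrite (bigD1 i) //= leq_addr. Qed.

Lemma skel_prod_transfer (R : rcfType) (k r : nat) (T : 'I_r -> finType)
  (e e' : 'I_r -> nat) (Q : forall i, T i -> 'rV[R]_(e i))
  (Q' : forall i, T i -> 'rV[R]_(e' i)) :
  (forall i (G : {set T i}), G != set0 ->
     (\rank (hmx (Q i) G)).-1 <= k ->
     (exists c, G = maximizers (fun s => dotv c (Q i s))) ->
     (exists c, G = maximizers (fun s => dotv c (Q' i s))) /\
     \rank (hmx (Q' i) G) = \rank (hmx (Q i) G))%N ->
  forall F, skel (prod_pts Q) k F -> skel (prod_pts Q') k F.
Proof.
move=> small F [faceF rankF].
have [->|/set0Pn [x0 x0F]] := eqVneq F set0.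
  by split; [left | rewrite hmx_set0 mxrank0].
case/face_of_prod: faceF x0F rankF => [->|[c ->]]; first by rewrite inE.
set G := fun i => maximizers _ => x0G rankF.
have G0 i : G i != set0.
  by apply/set0Pn; exists (x0 i); move: x0G; rewrite inE => /forallP.
move: rankF; rewrite (rank_hmx_prod _ x0G) add1n ltnS => rankF.
have small_i i := small i (G i) (G0 i)
  (leq_trans (leq_sum_term _ i) rankF) (ex_intro _ (c i) erefl).
split.
  have [c' c'E] := fin_all_exists (fun i => (small_i i).1).
  by apply/face_of_prod; right; exists c'; apply: eq_prodset.
rewrite (rank_hmx_prod _ x0G) add1n ltnS; apply: leq_trans rankF.
by apply: leq_sum => i _; rewrite (small_i i).2.
Qed.

Section Simplex.
Variable R : rcfType.
Variable n : nat.

Lemma rank_hmx_simplex (G : {set 'I_n.+1}) :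
  \rank (hmx (@simplex_pts R n) G) = #|G|.
Proof.
pose fs (g : 'I_n.+1) : 'cV[R]_(1 + n) :=
  if unlift ord0 g is Some j then col_mx 0%:M (delta_mx j 0)
  else col_mx 1%:M (const_mx (-1)).
apply: (@rank_hmx_dual _ _ _ _ _ fs) => g h _ _.
rewrite /fs /simplex_pts.
case: unliftP => [j ->|->]; case: unliftP => [j' ->|->];
  rewrite hrow_mul; congr (_%:M).
- rewrite mul_delta_mx_cond (inj_eq lift_inj) eq_sym.
  by case: (j' == j); rewrite ?mulr1n ?mulr0n !mxE ?add0r.
- rewrite (negbTE (neq_lift _ _)) mxE.
  rewrite (bigD1 j) //= big1 ?addr0 ?mxE ?eqxx /= ?mul1r ?subrr //.
  by move=> i ij; rewrite !mxE (negbTE ij) mul0r.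
- by rewrite eq_sym (negbTE (neq_lift _ _)) mul0mx !mxE add0r.
- by rewrite eqxx mul0mx !mxE addr0.
Qed.

Lemma dotv_delta (c : 'rV[R]_n) j : dotv c (delta_mx 0 j) = c 0 j.
Proof.
rewrite /dotv mxE (bigD1 j) //= big1 ?addr0 ?mxE ?eqxx ?mulr1 //.
by move=> a aj; rewrite !mxE (negbTE aj) andbF mulr0.
Qed.

(* every nonempty vertex set of a simplex is a face: maximize the
   indicator function of G *)
Lemma simplex_face (G : {set 'I_n.+1}) :
  G != set0 -> exists c, G = maximizers (fun s => dotv c (@simplex_pts R n s)).
Proof.
move=> G0; pose c := \row_j ((lift ord0 j \in G)%:R - (ord0 \in G)%:R : R).
exists c.
have cE s : dotv c (@simplex_pts R n s) = (s \in G)%:R - (ord0 \in G)%:R.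
  rewrite /simplex_pts; case: unliftP => [j ->|->]; first by rewrite dotv_delta mxE.
  by rewrite subrr /dotv trmx0 mulmx0 mxE.
symmetry; apply: maximizersE => // [g h gG hG|g h gG hG]; rewrite !cE ?gG ?hG //.
by rewrite (negbTE hG) ltrD2r ltr01.
Qed.

End Simplex.

Section MomentCurve.
Variable R : rcfType.
Variables (U : finType) (D : nat) (s : U -> R).

Definition lagrange (G : {set U}) g : {poly R} :=
  let L := \prod_(h in G :\ g) ('X - (s h)%:P) in (L.[s g])^-1 *: L.

Lemma dotv_moment (p : {poly R}) y : (size p <= D.+1)%N ->
  dotv (\row_(a < D) p`_a.+1) (moment D y) = p.[y] - p`_0.
Proof.
move=> pD; rewrite (horner_coef_wide _ pD) big_ord_recl expr0 mulr1 addrC addKr.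
by rewrite /dotv mxE; apply: eq_bigr => a _; rewrite !mxE mulrC.
Qed.

(* at most D+1 distinct points on the moment curve are affinely
   independent: the Lagrange polynomials form a dual family *)
Lemma rank_hmx_moment_small (G : {set U}) :
  {in G &, injective s} -> (#|G| <= D.+1)%N ->
  \rank (hmx (fun x => moment D (s x)) G) = #|G|.
Proof.
move=> sinj GD.
pose fs g := let p := lagrange G g in
  col_mx (p`_0)%:M (\col_(a < D) p`_a.+1).
apply: (@rank_hmx_dual _ _ _ _ _ fs) => g h gG hG.
rewrite /fs hrow_mul; congr (_%:M).
have lagr_size : (size (lagrange G g) <= D.+1)%N.
  apply: leq_trans (size_scale_leq _ _) _.
  rewrite size_prod; last by move=> i _; rewrite polyXsubC_eq0.
  under eq_bigr do rewrite size_XsubC.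
  move: GD; rewrite (cardsD1 g G) gG sum_nat_const (_ : #|_| = #|G :\ g|) //.
  lia.
rewrite [X in X = _](_ : _ = (lagrange G g).[s h]); last first.
  rewrite (horner_coef_wide _ lagr_size) big_ord_recl expr0 mulr1; congr (_ + _).
  by rewrite mxE; apply: eq_bigr => a _; rewrite !mxE mulrC.
rewrite /lagrange hornerZ !horner_prod.
under eq_bigr do rewrite hornerXsubC.
under [X in _ * X = _]eq_bigr do rewrite hornerXsubC.
have nz : \prod_(i in G :\ g) (s g - s i) != 0.
  apply/prodf_neq0 => i; rewrite !inE => /andP [ig iG].
  by rewrite subr_eq0; apply: contra ig => /eqP E; rewrite (sinj _ _ iG gG (esym E)).
case: (eqVneq g h) => [<-|gh]; first by rewrite mulVf.
rewrite [X in _ * X](bigD1 h) /=; last by rewrite !inE eq_sym gh hG.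
by rewrite subrr mul0r mulr0.
Qed.

Lemma subset_of_card (G : {set U}) m :
  (m <= #|G|)%N -> exists2 G' : {set U}, G' \subset G & #|G'| = m.
Proof.
case/card_geqP => l [ul lm lG]; exists [set x in l].
  by apply/subsetP => x; rewrite inE => /lG.
by rewrite cardsE (card_uniqP ul).
Qed.

Lemma rank_hmx_moment (G : {set U}) :
  {in G &, injective s} ->
  \rank (hmx (fun x => moment D (s x)) G) = minn #|G| D.+1.
Proof.
move=> sinj; case: (leqP #|G| D.+1) => GD; first by rewrite rank_hmx_moment_small.
apply/eqP; rewrite eqn_leq; apply/andP; split.
  by apply: leq_trans (rank_leq_col _) _; rewrite add1n.
have [G' G'G cG'] := subset_of_card (ltnW GD).
rewrite -cG' -(@rank_hmx_moment_small G') ?cG' //; last first.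
  by move=> a b aG bG; apply: sinj; apply: (subsetP G'G).
exact: rank_hmx_subset.
Qed.

(* neighborliness: a set of at most D/2 points on the moment curve is a
   face, cut out by -\prod_(g in G) (t - s g)^2 *)
Lemma moment_face (G : {set U}) :
  injective s -> G != set0 -> (2 * #|G| <= D)%N ->
  exists c, G = maximizers (fun x => dotv c (moment D (s x))).
Proof.
move=> sinj G0 GD.
pose p := - \prod_(g in G) ('X - (s g)%:P) ^+ 2.
have pD : (size p <= D.+1)%N.
  rewrite size_polyN size_prod; last by move=> i _; rewrite expf_neq0 ?polyXsubC_eq0.
  under eq_bigr do rewrite size_exp_XsubC.
  rewrite sum_nat_const (_ : #|_| = #|G|) //; lia.
exists (\row_(a < D) p`_a.+1).
have pE y : p.[y] = - \prod_(g in G) (y - s g) ^+ 2.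
  rewrite hornerN horner_prod; congr (- _); apply: eq_bigr => g _.
  by rewrite horner_exp hornerXsubC.
have vanish x : x \in G -> \prod_(g in G) (s x - s g) ^+ 2 = 0.
  by move=> xG; rewrite (bigD1 x) //= subrr expr0n mul0r.
symmetry; apply: maximizersE => // [g h gG hG|g h gG hG];
  rewrite !dotv_moment // !pE; first by rewrite !vanish.
rewrite ltrD2r ltrN2 vanish // lt0r prodr_ge0 ?andbT; last by move=> i _; exact: sqr_ge0.
apply/prodf_neq0 => i iG; rewrite expf_neq0 // subr_eq0.
by apply: contra hG => /eqP/sinj ->.
Qed.

End MomentCurve.

Section Factor.
Variable R : rcfType.
Variables (k ni : nat) (tf : nat -> R).
Hypothesis tf_inj :
  (2 * k + 3 <= ni)%N -> forall a b : 'I_ni.+1, tf a = tf b -> a = b.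

Local Notation V := (@factor_pts R k ni tf).

Lemma rank_hmx_factor (G : {set 'I_ni.+1}) :
  \rank (hmx V G) =
    if (2 * k + 3 <= ni)%N then minn #|G| (2 * k + 3) else #|G|.
Proof.
move: tf_inj; rewrite /factor_pts /factor_dim.
case: (2 * k + 3 <= ni)%N => [inj|_]; last exact: rank_hmx_simplex.
rewrite (@rank_hmx_moment _ _ (2 * k + 2) (fun j : 'I_ni.+1 => tf j)) ?addn3 ?addn2 //.
by move=> a b _ _; apply: inj.
Qed.

Lemma factor_small_card (G : {set 'I_ni.+1}) :
  G != set0 -> ((\rank (hmx V G)).-1 <= k)%N -> (#|G| <= k.+1)%N.
Proof.
rewrite -card_gt0 rank_hmx_factor; case: (2 * k + 3 <= ni)%N; lia.
Qed.

Lemma factor_small_rank (G : {set 'I_ni.+1}) :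
  (#|G| <= k.+1)%N -> \rank (hmx V G) = #|G|.
Proof. rewrite rank_hmx_factor; case: (2 * k + 3 <= ni)%N; lia. Qed.

Lemma factor_face (G : {set 'I_ni.+1}) :
  G != set0 -> (#|G| <= k.+1)%N ->
  exists c, G = maximizers (fun s => dotv c (V s)).
Proof.
move=> G0 Gk; move: tf_inj; rewrite /factor_pts /factor_dim.
case: (2 * k + 3 <= ni)%N => [inj|_]; last exact: simplex_face.
apply: (@moment_face _ _ _ (fun j : 'I_ni.+1 => tf j)) => //.
  by move=> a b; apply: inj.
by rewrite (_ : (2 * k + 2 = 2 * k.+1)%N) ?leq_mul2l ?Gk // mulnS addnC.
Qed.

Lemma factor_to_simplex (G : {set 'I_ni.+1}) :
  G != set0 -> ((\rank (hmx V G)).-1 <= k)%N ->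
  (exists c, G = maximizers (fun s => dotv c (@simplex_pts R ni s))) /\
  \rank (hmx (@simplex_pts R ni) G) = \rank (hmx V G).
Proof.
move=> G0 /(factor_small_card G0) Gk.
by rewrite rank_hmx_simplex factor_small_rank //; split => //; apply: simplex_face.
Qed.

Lemma simplex_to_factor (G : {set 'I_ni.+1}) :
  G != set0 -> ((\rank (hmx (@simplex_pts R ni) G)).-1 <= k)%N ->
  (exists c, G = maximizers (fun s => dotv c (V s))) /\
  \rank (hmx V G) = \rank (hmx (@simplex_pts R ni) G).
Proof.
rewrite rank_hmx_simplex => G0 Gk.
have {}Gk : (#|G| <= k.+1)%N by move: G0; rewrite -card_gt0; lia.
by rewrite factor_small_rank //; split => //; apply: factor_face.
Qed.

Lemma factor_pts_affine : exists (A : 'M[R]_(ni, factor_dim k ni)) b,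
  forall j, V j = simplex_pts R j *m A + b.
Proof.
rewrite /factor_pts /factor_dim; case: (2 * k + 3 <= ni)%N; last first.
  by exists 1%:M, 0 => j; rewrite mulmx1 addr0.
exists (\matrix_(j < ni) (moment (2 * k + 2) (tf j.+1) - moment (2 * k + 2) (tf 0))).
exists (moment (2 * k + 2) (tf 0)) => j; rewrite /simplex_pts.
case: unliftP => [j' ->|->]; last by rewrite mul0mx add0r.
by rewrite -rowE rowK lift0 subrK.
Qed.

End Factor.

Section Lifting.
Variable R : rcfType.

Lemma poset_iso_id (T : finType) (P P' : {set T} -> Prop) :
  (forall F, P F <-> P' F) -> poset_iso P P'.
Proof.
move=> PP'; exists id; split; [|split] => //.
- by move=> F /PP'.
- by move=> G /PP' PG; exists G.
Qed.

Lemma dotv_lift m (c : 'rV[R]_(m + 1)) (v : 'rV[R]_m) :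
  dotv c (row_mx v 1%:M) = dotv (lsubmx c) v + rsubmx c 0 0.
Proof.
by rewrite /dotv -[c in LHS](hsubmxK c) tr_row_mx mul_row_col trmx1 mulmx1 mxE.
Qed.

Lemma face_of_lift (T : finType) m (V : T -> 'rV[R]_m) F :
  face_of (fun u => row_mx (V u) (1%:M : 'M[R]_1)) F <-> face_of V F.
Proof.
split => [[->|[c ->]]|[->|[c ->]]]; try by left.
  right; exists (lsubmx c); apply/setP => x; rewrite !inE.
  by apply/forallP/forallP => H y; have := H y; rewrite !dotv_lift lerD2r.
right; exists (row_mx c 0); apply/setP => x; rewrite !inE.
by apply/forallP/forallP => H y; have := H y;
  rewrite !dotv_lift row_mxKl row_mxKr !mxE !addr0.
Qed.

Lemma affine_image_projection (T : finType) m d (W : T -> 'rV[R]_m)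
  (V : T -> 'rV[R]_d) (A : 'M[R]_(m, d)) (b : 'rV[R]_d) :
  (forall u, V u = W u *m A + b) ->
  exists B : 'M[R]_(m + 1, d), forall x,
    in_hull V x <-> in_hull (fun u => row_mx (W u) (1%:M : 'M[R]_1) *m B) x.
Proof.
move=> VE; exists (col_mx A b) => x.
have VE' u : V u = row_mx (W u) 1%:M *m col_mx A b.
  by rewrite mul_row_col mul1mx VE.
by split; case=> l [l0 [l1 ->]]; exists l; do ! split => //;
  apply: eq_bigr => u _; rewrite VE'.
Qed.

End Lifting.

Lemma least_nat (P : nat -> Prop) :
  (exists m, P m) -> exists m, P m /\ forall m', P m' -> (m <= m')%N.
Proof.
move=> Pne; have [m [[Pm mleast] _]] :=
  dec_inh_nat_subset_has_unique_least_element P (fun m => classic (P m)) Pne.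
by exists m; split => // m' /mleast /ssrnat.leP.
Qed.

Lemma is_min_dim_exists (R : rcfType)
  (P : forall (T : finType) d, (T -> 'rV[R]_d) -> Prop)
  (T : finType) d (V : T -> 'rV[R]_d) :
  P T d V -> exists m, is_min_dim P m.
Proof.
move=> PV.
have [m [[T' [d' [V' [PV' <-]]]] mleast]] := least_nat
  (ex_intro (fun m => exists (T : finType) d (V : T -> 'rV[R]_d),
                         P T d V /\ pdim V = m) _ (ex_intro _ T (ex_intro _ d
     (ex_intro _ V (conj PV erefl))))).
exists (pdim V'); split; first by exists T', d', V'.
by move=> T1 d1 V1 PV1; apply: mleast; exists T1, d1, V1.
Qed.

Lemma is_min_dim_le (R : rcfType)
  (P P' : forall (T : finType) d, (T -> 'rV[R]_d) -> Prop) (m m' : nat) :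
  (forall (T : finType) d (V : T -> 'rV[R]_d), P' T d V -> P T d V) ->
  is_min_dim P m -> is_min_dim P' m' -> (m <= m')%N.
Proof.
move=> P'P [_ mleast] [[T [d [V [P'V <-]]]] _].
exact/mleast/P'P.
Qed.

Section ProductOfCyclicPolytopes.
Variable R : rcfType.
Variables (k r : nat) (n : 'I_r -> nat) (t : 'I_r -> nat -> R).
Hypothesis t_inj : forall i, (2 * k + 3 <= n i)%N ->
  forall a b : 'I_(n i).+1, t i a = t i b -> a = b.

Local Notation X := {dffun forall i : 'I_r, 'I_(n i).+1}.
Local Notation V := (thm_pts k n t).

Lemma skel_thm_pts (F : {set X}) : skel V k F <-> skel (@Delta_pts R r n) k F.
Proof.
rewrite /thm_pts /Delta_pts; split; apply: skel_prod_transfer => i G G0 Gk _.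
  exact: factor_to_simplex (@t_inj i) _ G0 Gk.
exact: simplex_to_factor (@t_inj i) _ G0 Gk.
Qed.

Lemma thm_pts_PSN : PSN k n V.
Proof. exact: poset_iso_id skel_thm_pts. Qed.

Lemma pdim_thm_pts : pdim V = (\sum_i factor_dim k (n i))%N.
Proof.
have setTE : setT = prodset (fun i => [set: 'I_(n i).+1]).
  by apply/setP => x; rewrite !inE; apply/esym/forallP => i; rewrite inE.
have x0T : (finfun (fun i => ord0) : X) \in prodset (fun i => [set: 'I_(n i).+1]).
  by rewrite inE; apply/forallP => i; rewrite inE.
rewrite /pdim setTE (rank_hmx_prod _ x0T) add1n /=; apply: eq_bigr => i _.
rewrite rank_hmx_factor ?cardsT ?card_ord /factor_dim; last exact: t_inj.
by case: ifP => // big; lia.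
Qed.

Lemma sum_factor_dim :
  let I := [set i : 'I_r | (2 * k + 3 <= n i)%N] in
  ((2 * k + 2) * #|I| + \sum_(i < r | i \notin I) n i)%N =
  (\sum_i factor_dim k (n i))%N.
Proof.
move=> I; rewrite [RHS](bigID (fun i => i \in I)) /=; congr (_ + _)%N.
  rewrite mulnC -sum_nat_const; apply: eq_bigr => i.
  by rewrite inE /factor_dim => ->.
by apply: eq_bigr => i; rewrite inE /factor_dim => /negbTE ->.
Qed.

Lemma thm_pts_affine : exists A b,
  forall x, V x = @Delta_pts R r n x *m A + b.
Proof.
have affine i : exists Ab :
    ('M[R]_(n i, factor_dim k (n i)) * 'rV[R]_(factor_dim k (n i)))%type,
    forall j, factor_pts k (t i) j = simplex_pts R j *m Ab.1 + Ab.2.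
  by have [A [b AbE]] := @factor_pts_affine R k (n i) (t i); exists (A, b).
have [Ab AbE] := fin_all_exists affine.
pose A := \mxcol_i ((Ab i).1 *m @factor_emb R r (fun i => factor_dim k (n i)) i).
exists A, (\mxrow_i (Ab i).2) => x.
rewrite /Delta_pts /prod_pts mul_mxrow_mxcol /thm_pts /prod_pts.
rewrite (eq_mxrow (fun i => AbE i (x i))) !mxrow_factor_emb -big_split /=.
by apply: eq_bigr => i _; rewrite mulmxDl mulmxA.
Qed.

Lemma thm_pts_PPSN : PPSN k n V.
Proof.
split; first exact: thm_pts_PSN.
have [A [b VE]] := thm_pts_affine.
have [B hullE] := affine_image_projection VE.
exists _, _, (fun u => row_mx (@Delta_pts R r n u) (1%:M : 'M[R]_1)), B.
by split=> //; apply: poset_iso_id => F; apply: face_of_lift.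
Qed.

End ProductOfCyclicPolytopes.

Unset Implicit Arguments. Set Strict Implicit.

Theorem mainTheorem5 (R : rcfType) (k r : nat) (n : 'I_r -> nat)
  (t : 'I_r -> nat -> R)
  (hr : (1 <= r)%N) (hn : forall i, (1 <= n i)%N)
  (ht : forall i, (2 * k + 3 <= n i)%N ->
        forall a b : 'I_(n i).+1, t i a = t i b -> a = b) :
  let I := [set i : 'I_r | (2 * k + 3 <= n i)%N] in
  let D := ((2 * k + 2) * #|I| + \sum_(i < r | i \notin I) n i)%N in
  PPSN k n (thm_pts k n t) /\ pdim (thm_pts k n t) = D /\
  exists m1 m2 : nat,
    is_min_dim (fun T d (V : T -> 'rV[R]_d) => PSN k n V) m1 /\
    is_min_dim (fun T d (V : T -> 'rV[R]_d) => PPSN k n V) m2 /\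
    (m1 <= m2 <= D)%N.
Proof.
move=> I D.
have ppsn := thm_pts_PPSN ht.
have dimD : pdim (thm_pts k n t) = D.
  by rewrite (pdim_thm_pts ht); exact/esym/sum_factor_dim.
have [m1 min1] :=
  is_min_dim_exists (P := fun T d (V : T -> 'rV[R]_d) => PSN k n V) ppsn.1.
have [m2 min2] :=
  is_min_dim_exists (P := fun T d (V : T -> 'rV[R]_d) => PPSN k n V) ppsn.
split=> //; split=> //; exists m1, m2; split=> //; split=> //.
rewrite (is_min_dim_le _ min1 min2); last by move=> T d W [].
by rewrite -dimD; apply: min2.2.
Qed.
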